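(* Let $q$ be a prime power, let $1\le k\le m$ be integers, and let $C\subseteq\mathbb{F}_{q^m}^k$ be an $\mathbb{F}_{q^m}$-linear code of dimension $1\le t\le k$ over $\mathbb{F}_{q^m}$. Fix an integer $1\le\mu\le k$. The following are equivalent: (1) $\Delta_\mu(C)>\Delta_{\mu-1}(C)$; (2) there exists $1\le r\le t$ with $m_r(C)=\mu$.
   Context: A subspace $V\subseteq\mathbb{F}_{q^m}^k$ is Frobenius-closed if $(v_1^q,\dots,v_k^q)\in V$ whenever $v\in V$; $\Lambda_q(k,m)$ is the set of Frobenius-closed $\mathbb{F}_{q^m}$-subspaces. For $0\le\mu\le k$, $\Delta_\mu(C):=\max\{\dim_{\mathbb{F}_{q^m}}(V\cap C): V\in\Lambda_q(k,m),\ \dim_{\mathbb{F}_{q^m}}(V)=\mu\}$. The $r$-th generalized rank weight is $m_r(C):=\min\{\dim_{\mathbb{F}_{q^m}}(V):V\in\Lambda_q(k,m),\ \dim_{\mathbb{F}_{q^m}}(V\cap C)\ge r\}$. *)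

From mathcomp Require Import all_boot all_order all_algebra all_field.
Set Implicit Arguments. Unset Strict Implicit. Unset Printing Implicit Defensive.
Import GRing.Theory.
Local Open Scope ring_scope.

(* Subspaces of L^k are represented as row spaces of k x k matrices
   (mxalgebra, %MS), vectors as row vectors 'rV[L]_k. *)

Definition frobv (L : finFieldType) (q k : nat) (v : 'rV[L]_k) : 'rV[L]_k :=
  map_mx (fun x => x ^+ q) v.

Definition frob_closed (L : finFieldType) (q k : nat) (V : 'M[L]_k) : bool :=
  [forall v : 'rV[L]_k, (v <= V)%MS ==> (frobv q v <= V)%MS].

Definition Delta (L : finFieldType) (q k : nat) (C : 'M[L]_k) (mu : nat) : nat :=
  \max_(V : 'M[L]_k | frob_closed q V && (\rank V == mu)) \rank (V :&: C)%MS.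

(* m_r(C): minimum, with default k (the full space, dim k, is Frobenius-closed
   and admissible whenever r <= dim C) *)
Definition grw (L : finFieldType) (q k : nat) (C : 'M[L]_k) (r : nat) : nat :=
  \big[minn/k]_(V : 'M[L]_k | frob_closed q V && (r <= \rank (V :&: C)%MS)%N) \rank V.

From mathcomp Require Import all_boot all_order all_algebra all_field.
Set Implicit Arguments. Unset Strict Implicit. Unset Printing Implicit Defensive.
Import GRing.Theory.
Local Open Scope ring_scope.

(* Since q is a power of the characteristic, x |-> x^q is additive, so adding a
   standard basis vector (which is fixed by the Frobenius) to a Frobenius-closed
   space keeps it Frobenius-closed; hence every Frobenius-closed space extends to
   Frobenius-closed spaces of all larger dimensions and Delta is monotone. This
   gives the Galois connection  m_r(C) <= j  <->  r <= Delta_j(C),  so that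
   m_r(C) = mu exactly when Delta_(mu-1)(C) < r <= Delta_mu(C). *)

Lemma geq_bigmin_cond (I : finType) (P : pred I) (F : I -> nat) d i0 :
  P i0 -> (\big[minn/d]_(i | P i) F i <= F i0)%N.
Proof.
move=> Pi0; rewrite unlock.
elim: (index_enum I) (mem_index_enum i0) => // i s IHs.
rewrite inE /= => /orP[/eqP <-|i0s]; first by rewrite Pi0 geq_minl.
by case: (P i) => /=; [apply: leq_trans (geq_minr _ _) (IHs i0s) | apply: IHs].
Qed.

Lemma bigmin_default_or_attained (I : finType) (P : pred I) (F : I -> nat) d :
  \big[minn/d]_(i | P i) F i = d \/
  exists2 i, P i & \big[minn/d]_(i | P i) F i = F i.
Proof.
elim/big_ind: _; [by left | | by move=> i Pi; right; exists i].
by move=> x y Hx Hy; rewrite /minn; case: ifP.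
Qed.

Lemma mxrank_adds_notsub (F : fieldType) m n (V : 'M[F]_(m, n)) (v : 'rV[F]_n) :
  ~~ (v <= V)%MS -> \rank (V + v)%MS = (\rank V).+1.
Proof.
move=> vV; apply/eqP; rewrite eqn_leq; apply/andP; split.
  apply: leq_trans (mxrank_adds_leqif V v) _.
  by rewrite -[X in (_ <= X)%N]addn1 leq_add2l rank_leq_row.
apply: rank_ltmx; rewrite ltmxE addsmxSl /=.
by apply: contra vV; apply: submx_trans (addsmxSr V v).
Qed.

Lemma exists_delta_notsub (F : fieldType) k (V : 'M[F]_k) :
  (\rank V < k)%N -> exists i : 'I_k, ~~ ((delta_mx 0 i : 'rV[F]_k) <= V)%MS.
Proof.
move=> rVk; apply/existsP; rewrite -negb_forall; apply: contraL rVk => /forallP subV.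
have : (1%:M <= V)%MS by apply/row_subP => i; rewrite row1; apply: subV.
by move/mxrankS; rewrite mxrank1 leqNgt.
Qed.

Section FrobeniusClosed.
Variables (L : finFieldType) (q k : nat).
Hypothesis exprDq : forall x y : L, (x + y) ^+ q = x ^+ q + y ^+ q.
Hypothesis q_gt0 : (0 < q)%N.

Lemma frobvD (u v : 'rV[L]_k) : frobv q (u + v) = frobv q u + frobv q v.
Proof. by apply/matrixP => a b; rewrite !mxE exprDq. Qed.

Lemma frobvZ (c : L) (v : 'rV[L]_k) : frobv q (c *: v) = c ^+ q *: frobv q v.
Proof. by apply/matrixP => a b; rewrite !mxE exprMn. Qed.

Lemma frobv_delta (i : 'I_k) : frobv q (delta_mx 0 i : 'rV[L]_k) = delta_mx 0 i.
Proof.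
apply/matrixP => a b; rewrite !mxE; case: (_ && _); first by rewrite expr1n.
by rewrite expr0n gtn_eqF.
Qed.

Lemma frob_closed0 : frob_closed q (0 : 'M[L]_k).
Proof.
apply/forallP => v; apply/implyP; rewrite submx0 => /eqP ->.
suff -> : frobv q (0 : 'rV[L]_k) = 0 by apply: sub0mx.
by apply/matrixP => a b; rewrite !mxE expr0n gtn_eqF.
Qed.

Lemma frob_closed1 : frob_closed q (1%:M : 'M[L]_k).
Proof. by apply/forallP => v; apply/implyP => _; apply: submx1. Qed.

Lemma frob_closed_adds_delta (V : 'M[L]_k) (i : 'I_k) :
  frob_closed q V -> frob_closed q (V + (delta_mx 0 i : 'rV[L]_k))%MS.
Proof.
move=> /forallP closedV; apply/forallP => v; apply/implyP.
case/sub_addsmxP=> [[u w] /= ->]; rewrite frobvD addmx_sub_adds //.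
  by have /implyP := closedV (u *m V); apply; apply: submxMl.
have /sub_rVP[c ->] : (w *m delta_mx 0 i <= (delta_mx 0 i : 'rV[L]_k))%MS by apply: submxMl.
by rewrite frobvZ frobv_delta scalemx_sub.
Qed.

Lemma frob_closed_extend (V : 'M[L]_k) j :
  frob_closed q V -> (\rank V <= j <= k)%N ->
  exists2 W : 'M[L]_k, frob_closed q W /\ \rank W = j & (V <= W)%MS.
Proof.
move=> closedV; elim: j => [|j IHj] /andP[rVj jk].
  by exists V => //; split => //; apply/eqP; rewrite -leqn0.
have [rV_eq|rV_neq] := eqVneq (\rank V) j.+1; first by exists V.
have rVjk : (\rank V <= j <= k)%N by rewrite -ltnS ltn_neqAle rV_neq rVj ltnW.
have [W [closedW rWj] sVW] := IHj rVjk.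
have [i notsub] : exists i : 'I_k, ~~ ((delta_mx 0 i : 'rV[L]_k) <= W)%MS.
  by apply: exists_delta_notsub; rewrite rWj.
exists (W + (delta_mx 0 i : 'rV[L]_k))%MS; last by apply: submx_trans sVW (addsmxSl _ _).
by split; [apply: frob_closed_adds_delta | rewrite mxrank_adds_notsub // rWj].
Qed.

Variable C : 'M[L]_k.

Lemma leq_rank_cap_Delta (V : 'M[L]_k) :
  frob_closed q V -> (\rank (V :&: C) <= Delta q C (\rank V))%N.
Proof.
move=> closedV; rewrite /Delta.
by apply: (@leq_bigmax_cond _ (fun W : 'M[L]_k => frob_closed q W && (\rank W == \rank V))
  (fun W => \rank (W :&: C))); rewrite closedV eqxx.
Qed.

Lemma Delta_witness j : (j <= k)%N -> exists V : 'M[L]_k,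
  [/\ frob_closed q V, \rank V = j & Delta q C j = \rank (V :&: C)].
Proof.
move=> jk; rewrite /Delta.
set P := fun V : 'M[L]_k => frob_closed q V && (\rank V == j).
have r0j : (\rank (0 : 'M[L]_k)%R <= j <= k)%N by rewrite mxrank0.
have [V0 [closedV0 rV0] _] := frob_closed_extend frob_closed0 r0j.
have [|V PV ->] := eq_bigmax_cond (fun V => \rank (V :&: C)) (A := P).
  by apply/card_gt0P; exists V0; rewrite unfold_in /P /= closedV0 rV0 eqxx.
by case/andP: PV => closedV /eqP rV; exists V.
Qed.

Lemma leq_Delta i j : (i <= j <= k)%N -> (Delta q C i <= Delta q C j)%N.
Proof.
move=> /andP[ij jk]; apply/bigmax_leqP => V /andP[closedV /eqP rV].
have rVj : (\rank V <= j <= k)%N by rewrite rV ij jk.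
have [W [closedW <-] sVW] := frob_closed_extend closedV rVj.
by apply: leq_trans (leq_rank_cap_Delta closedW); apply/mxrankS/capmxS.
Qed.

Lemma Delta_le_rank j : (Delta q C j <= \rank C)%N.
Proof. by apply/bigmax_leqP => V _; apply/mxrankS/capmxSr. Qed.

Lemma grw_le (V : 'M[L]_k) r :
  frob_closed q V -> (r <= \rank (V :&: C))%N -> (grw q C r <= \rank V)%N.
Proof. by move=> closedV rV; apply: geq_bigmin_cond; rewrite closedV. Qed.

Lemma grw_witness r : (r <= \rank C)%N -> exists V : 'M[L]_k,
  [/\ frob_closed q V, (r <= \rank (V :&: C))%N & grw q C r = \rank V].
Proof.
move=> rC; case: (bigmin_default_or_attained
  (fun V : 'M[L]_k => frob_closed q V && (r <= \rank (V :&: C))%N) (@mxrank _ k k) k).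
  by exists 1%:M; rewrite frob_closed1 cap1mx mxrank1.
by case=> V /andP[closedV rV] grwV; exists V.
Qed.

Lemma grw_leq_Delta r j : (r <= \rank C)%N -> (j <= k)%N ->
  (grw q C r <= j)%N = (r <= Delta q C j)%N.
Proof.
move=> rC jk; apply/idP/idP => [grw_j | r_Delta].
  have [V [closedV rV grwV]] := grw_witness rC.
  apply: leq_trans rV (leq_trans (leq_rank_cap_Delta closedV) _).
  by apply: leq_Delta; rewrite -grwV grw_j jk.
have [V [closedV rV DeltaV]] := Delta_witness jk.
by rewrite -rV; apply: grw_le; rewrite // -DeltaV.
Qed.

Lemma grw_eq_Delta r mu : (r <= \rank C)%N -> (0 < mu <= k)%N ->
  (grw q C r == mu) = (Delta q C mu.-1 < r <= Delta q C mu)%N.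
Proof.
move=> rC /andP[mu_gt0 muk].
rewrite eqn_leq andbC -[in (mu <= _)%N](prednK mu_gt0) ltnNge.
by rewrite !grw_leq_Delta // -?ltnNge // (leq_trans (leq_pred mu)).
Qed.

End FrobeniusClosed.

Theorem theorem8p2 (L : finFieldType) (q m k t mu : nat) (C : 'M[L]_k) :
  (exists p e, prime p /\ (0 < e)%N /\ q = (p ^ e)%N) ->
  #|L| = (q ^ m)%N ->
  (1 <= k <= m)%N ->
  \rank C = t -> (1 <= t <= k)%N ->
  (1 <= mu <= k)%N ->
  ((Delta q C mu.-1 < Delta q C mu)%N <->
   exists r, (1 <= r <= t)%N /\ grw q C r = mu).
Proof.
move=> [p [e [p_pr [_ qE]]]] cardL _ rC _ mu_bounds.
have pL : p \in [pchar L] by apply: (@card_finPcharP L p (e * m)) p_pr; rewrite cardL qE expnM.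
have exprDq (x y : L) : (x + y) ^+ q = x ^+ q + y ^+ q.
  by rewrite qE; apply: exprDn_pchar; rewrite pnatX (pnatE _ p_pr) pL.
have q_gt0 : (0 < q)%N by rewrite qE expn_gt0 prime_gt0.
have grw_eq r : (r <= t)%N -> (grw q C r == mu) = (Delta q C mu.-1 < r <= Delta q C mu)%N.
  by rewrite -rC => rt; apply: grw_eq_Delta.
have Delta_le_t j : (Delta q C j <= t)%N by rewrite -rC Delta_le_rank.
split=> [Delta_lt | [r [/andP[_ rt] /eqP]]].
- exists (Delta q C mu); rewrite (leq_ltn_trans (leq0n _) Delta_lt) Delta_le_t.
  by split=> //; apply/eqP; rewrite grw_eq // Delta_lt leqnn.
- by rewrite grw_eq // => /andP[lt_r r_le]; apply: leq_trans lt_r r_le.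
Qed.
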